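(* Consider a prepare-and-measure QKD protocol with protocol map $\mathcal{E}^{(l)}$ (and ideal map $\mathcal{E}^{(l),\mathrm{ideal}}$) from $A^nB^n$ to $K_A\widetilde C$, in which Alice prepares, in each of $n$ rounds, $\rho^{\mathrm{prep}}_{AA'}=\sum_{i=1}^{d_A}p(i)|i\rangle\langle i|_A\otimes\rho_i$ with $\rho_i$ states on $A'$. Let the shielded protocol be the one in which Alice instead prepares $\rho^{\mathrm{prep}}_{AA_SA'}=\sum_{i=1}^{d_A}p(i)|i\rangle\langle i|_A\otimes|\rho_i\rangle\langle\rho_i|_{A_SA'}$, where $|\rho_i\rangle_{A_SA'}$ is a purification of $\rho_i$, the shield system $A_S$ is not sent to Bob, and the protocol map and ideal map are $\mathcal{E}^{(l)}\circ\mathrm{Tr}_{A_S^n}$ and $\mathcal{E}^{(l),\mathrm{ideal}}\circ\mathrm{Tr}_{A_S^n}$. If the shielded protocol is $\varepsilon_{\mathrm{sec}}$-secret, then the original protocol is $\varepsilon_{\mathrm{sec}}$-secret.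
   Context: A prepare-and-measure QKD protocol with per-round prepared state $\rho^{\mathrm{prep}}_{XA'}$ (Alice keeps $X$, sends $A'$) and protocol/ideal maps $\mathcal{E}^{(l)},\mathcal{E}^{(l),\mathrm{ideal}}$ acting on $X^nB^n$ is $\varepsilon_{\mathrm{sec}}$-secret if $\tfrac12\|((\mathcal{E}^{(l)}-\mathcal{E}^{(l),\mathrm{ideal}})\otimes\mathrm{id}_{E^n})[(\mathrm{id}_{X^n}\otimes\Phi)(\rho^{\mathrm{prep}\,\otimes n}_{XA'})]\|_1\leq\varepsilon_{\mathrm{sec}}$ for all channels $\Phi$ from $A'^n$ to $B^nE^n$ (Eve's attack). Here $X=A$ for the original protocol and $X=AA_S$ for the shielded one. The ideal map is the real protocol with the output key replaced, on acceptance, by a uniformly random key of the same length independent of all other outputs. *)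

(* An operator on a system with orthonormal basis
   indexed by the finite type T is a function T -> T -> algC (its matrix). *)
From HB Require Import structures.
From mathcomp Require Import all_boot all_order all_algebra.
From mathcomp Require Import algC.
Unset Printing Implicit Defensive.
Import Order.TTheory GRing.Theory Num.Theory.
Local Open Scope ring_scope.


Definition op (T : finType) := T -> T -> algC.
Definition linmap (T U : finType) := op T -> op U.

Definition trace {T : finType} (X : op T) : algC := \sum_(t : T) X t t.
Definition mulop {T : finType} (X Y : op T) : op T :=
  fun t t' => \sum_(s : T) X t s * Y s t'.
Definition adjop {T : finType} (X : op T) : op T := fun t t' => (X t' t)^*.

(* positive semidefinite: <v, X v> >= 0 for every vector v (in algC, 0 <= z
   means z is a nonnegative real; this also forces X Hermitian) *)
Definition psd {T : finType} (X : op T) : Prop :=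
  forall v : T -> algC, 0 <= \sum_(t : T) \sum_(t' : T) (v t)^* * X t t' * v t'.

Definition is_state {T : finType} (X : op T) : Prop := psd X /\ trace X = 1.

(* id_R (x) Phi and Phi (x) id_R *)
Definition idtens (R : finType) {T U : finType} (Phi : linmap T U) : linmap (R * T)%type (R * U)%type :=
  fun X p q => Phi (fun t t' => X (p.1, t) (q.1, t')) p.2 q.2.
Definition tensid {T U : finType} (R : finType) (Phi : linmap T U) : linmap (T * R)%type (U * R)%type :=
  fun X p q => Phi (fun t t' => X (t, p.2) (t', q.2)) p.1 q.1.

Definition is_linear_map {T U : finType} (Phi : linmap T U) : Prop :=
  forall (a : algC) (X Y : op T),
    Phi (fun t t' => a * X t t' + Y t t') = (fun u u' => a * Phi X u u' + Phi Y u u').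
Definition is_CP {T U : finType} (Phi : linmap T U) : Prop :=
  forall (R : finType) (X : op (R * T)%type), psd X -> psd (idtens R Phi X).
Definition is_TP {T U : finType} (Phi : linmap T U) : Prop :=
  forall X : op T, trace (Phi X) = trace X.
Definition is_channel {T U : finType} (Phi : linmap T U) : Prop :=
  [/\ is_linear_map Phi, is_CP Phi & is_TP Phi].

(* (1/2) ||X||_1 <= eps, where ||X||_1 = Tr sqrt(X^dagger X) and sqrt(.) is the
   (unique) positive semidefinite square root *)
Definition half_trnorm_le {T : finType} (X : op T) (eps : algC) : Prop :=
  exists P : op T, [/\ psd P, mulop P P = mulop (adjop X) X & trace P / 2%:R <= eps].

(* n-fold tensor power of rho_{XA'}, with the n copies regrouped as X^n A'^n *)
Definition tpow {X Ap : finType} (n : nat) (rho : op (X * Ap)%type)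
  : op ({ffun 'I_n -> X} * {ffun 'I_n -> Ap})%type :=
  fun p q => \prod_(i < n) rho (p.1 i, p.2 i) (q.1 i, q.2 i).

Definition assoc_op {A B C : finType} (X : op (A * (B * C))%type) : op ((A * B) * C)%type :=
  fun p q => X (p.1.1, (p.1.2, p.2)) (q.1.1, (q.1.2, q.2)).

Definition secret {X Ap B K : finType} (n : nat) (rho : op (X * Ap)%type)
  (E Eid : linmap ({ffun 'I_n -> X} * {ffun 'I_n -> B})%type K) (eps : algC) : Prop :=
  forall (TE : finType)
         (Phi : linmap {ffun 'I_n -> Ap} ({ffun 'I_n -> B} * {ffun 'I_n -> TE})%type),
    is_channel Phi ->
    let sigma := assoc_op (idtens {ffun 'I_n -> X} Phi (tpow n rho)) in
    half_trnorm_le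
      (fun p q => tensid {ffun 'I_n -> TE} E sigma p q
                  - tensid {ffun 'I_n -> TE} Eid sigma p q) eps.

(* key register K_A: None = abort (no key), Some k = key k of length l *)
Definition Key (l : nat) := {ffun 'I_l -> bool}.

(* ideal output: on acceptance the key is replaced by a uniformly random key
   independent of everything else (the conditional output on C~ is kept) *)
Definition ideal_out {l : nat} {C : finType} (Y : op (option (Key l) * C)%type)
  : op (option (Key l) * C)%type :=
  fun p q =>
    match p.1, q.1 with
    | None, None => Y p q
    | Some k, Some k' =>
        (if k == k' then (2 ^ l)%:R^-1 else 0) *
        \sum_(kap : Key l) Y (Some kap, p.2) (Some kap, q.2)
    | _, _ => 0
    end.

(* original prepared state sum_i p(i) |i><i|_A (x) rho_i *)
Definition prep {A Ap : finType} (p : A -> algC) (rho : A -> op Ap) : op (A * Ap)%type :=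
  fun x y => if x.1 == y.1 then p x.1 * rho x.1 x.2 y.2 else 0.

(* shielded prepared state sum_i p(i) |i><i|_A (x) |rho_i><rho_i|_{A_S A'} *)
Definition prep_shield {A S Ap : finType} (p : A -> algC) (psi : A -> S * Ap -> algC)
  : op ((A * S)%type * Ap)%type :=
  fun x y => if x.1.1 == y.1.1
             then p x.1.1 * (psi x.1.1 (x.1.2, x.2) * (psi x.1.1 (y.1.2, y.2))^*)
             else 0.

(* partial trace over the first factor, applied to |psi><psi| *)
Definition ptrace_pure {S Ap : finType} (psi : S * Ap -> algC) : op Ap :=
  fun x y => \sum_(s : S) psi (s, x) * (psi (s, y))^*.

(* Tr_{A_S^n} on A^n A_S^n B^n (the per-round registers (A, A_S) grouped) *)
Definition trS {A S B : finType} {n : nat}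
  (X : op ({ffun 'I_n -> A * S} * {ffun 'I_n -> B})%type) : op ({ffun 'I_n -> A} * {ffun 'I_n -> B})%type :=
  fun p q => \sum_(s : {ffun 'I_n -> S})
               X ([ffun i => (p.1 i, s i)], p.2) ([ffun i => (q.1 i, s i)], q.2).

(* The shield changes nothing an adversary or the protocol can see: the
   channel Phi acts on A'^n only and is linear, so it commutes with the
   partial trace over A_S^n, and tracing out A_S^n from n copies of the
   shielded state gives n copies of sum_i p(i) |i><i| (x) Tr_{A_S} |rho_i><rho_i|,
   which is the original prepared state.  Hence for every attack the real and
   ideal outputs of the two protocols coincide, and so do their distances. *)
From mathcomp Require Import all_boot all_order all_algebra.
From mathcomp Require Import algC.
From Stdlib Require Import FunctionalExtensionality.
Import Order.TTheory GRing.Theory Num.Theory.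
Local Open Scope ring_scope.

Lemma op_ext (T : finType) (X Y : op T) : (forall t t', X t t' = Y t t') -> X = Y.
Proof.
by move=> eqXY; do 2!apply: functional_extensionality => ?; apply: eqXY.
Qed.

Section LinearMap.

Variables (T U : finType) (Phi : linmap T U).
Hypothesis Phi_lin : is_linear_map Phi.

Lemma linear_map0 : Phi (fun _ _ => 0) = (fun _ _ => 0).
Proof.
have := Phi_lin 1 (fun _ _ => 0) (fun _ _ => 0).
have -> : (fun _ _ : T => (1 : algC) * 0 + 0) = (fun _ _ => 0).
  by apply: op_ext => t t'; rewrite mulr0 addr0.
move=> /(congr1 (fun X => X _ _)) eq0; apply: op_ext => u u'.
by move: (eq0 u u'); rewrite mul1r -{1}[Phi _ u u']addr0 => /addrI <-.
Qed.

Lemma linear_map_sum (I : Type) (r : seq I) (M : I -> op T) u u' :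
  Phi (fun t t' => \sum_(i <- r) M i t t') u u' = \sum_(i <- r) Phi (M i) u u'.
Proof.
elim: r => [|a r IHr].
  have -> : (fun t t' => \sum_(i <- [::]) M i t t') = (fun _ _ => 0).
    by apply: op_ext => t t'; rewrite big_nil.
  by rewrite big_nil linear_map0.
have -> : (fun t t' => \sum_(i <- a :: r) M i t t') =
          (fun t t' => 1 * M a t t' + \sum_(i <- r) M i t t').
  by apply: op_ext => t t'; rewrite big_cons mul1r.
by rewrite Phi_lin big_cons mul1r IHr.
Qed.

End LinearMap.

(* [trS] with an arbitrary second factor; [trS X] is convertible to [trSn X]. *)
Definition trSn {A S T : finType} {n : nat}
  (Y : op ({ffun 'I_n -> A * S} * T)%type) : op ({ffun 'I_n -> A} * T)%type :=
  fun p q => \sum_(s : {ffun 'I_n -> S})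
               Y ([ffun i => (p.1 i, s i)], p.2) ([ffun i => (q.1 i, s i)], q.2).

Definition trS1 {A S Ap : finType} (rho : op ((A * S) * Ap)%type) : op (A * Ap)%type :=
  fun x y => \sum_(s : S) rho ((x.1, s), x.2) ((y.1, s), y.2).

Lemma trSn_idtens (A S T U : finType) (n : nat) (Phi : linmap T U)
    (Y : op ({ffun 'I_n -> A * S} * T)%type) :
  is_linear_map Phi -> trSn (idtens _ Phi Y) = idtens _ Phi (trSn Y).
Proof.
by move=> Phi_lin; apply: op_ext => p q; rewrite /trSn /idtens -linear_map_sum.
Qed.

Lemma trSn_tpow (A S Ap : finType) (n : nat) (rho : op ((A * S) * Ap)%type) :
  trSn (tpow n rho) = tpow n (trS1 rho).
Proof.
apply: op_ext => p q; rewrite /trSn /tpow /trS1.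
under eq_bigr do under eq_bigr do rewrite !ffunE.
by rewrite -(bigA_distr_bigA (fun i s => rho ((p.1 i, s), p.2 i) ((q.1 i, s), q.2 i))).
Qed.

Lemma trS1_prep_shield (A S Ap : finType) (p : A -> algC) (psi : A -> S * Ap -> algC) :
  trS1 (prep_shield p psi) = prep p (fun i => ptrace_pure (psi i)).
Proof.
apply: op_ext => x y; rewrite /trS1 /prep_shield /prep /=.
by case: eqP => _; [rewrite -mulr_sumr | rewrite big1].
Qed.

Lemma tensid_trS_assoc {A S B TE K : finType} {n : nat}
    (E : linmap ({ffun 'I_n -> A} * {ffun 'I_n -> B})%type K)
    (Z : op ({ffun 'I_n -> A * S} * ({ffun 'I_n -> B} * TE))%type) :
  tensid TE (fun X => E (trS X)) (assoc_op Z) = tensid TE E (assoc_op (trSn Z)).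
Proof. by []. Qed.

Theorem lemma4 (n l : nat) (A AS Ap B C : finType)
  (p : A -> algC) (rho : A -> op Ap) (psi : A -> AS * Ap -> algC)
  (E : linmap ({ffun 'I_n -> A} * {ffun 'I_n -> B})%type (option (Key l) * C)%type)
  (eps : algC) :
  (forall i, 0 <= p i) -> \sum_(i : A) p i = 1 ->
  (forall i, is_state (rho i)) ->
  (forall i, ptrace_pure (psi i) = rho i) ->
  is_channel E ->
  secret n (prep_shield p psi)
         (fun X => E (trS X)) (fun X => ideal_out (E (trS X))) eps ->
  secret n (prep p rho) E (fun X => ideal_out (E X)) eps.
Proof.
move=> _ _ _ psi_purifies _ shielded_secret TE Phi Phi_channel.
have [Phi_lin _ _] := Phi_channel.
have rho_eq : (fun i => ptrace_pure (psi i)) = rho.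
  by apply: functional_extensionality.
move: (shielded_secret TE Phi Phi_channel) => /=.
rewrite (tensid_trS_assoc (fun X => ideal_out (E X))) tensid_trS_assoc.
by rewrite trSn_idtens // trSn_tpow trS1_prep_shield rho_eq.
Qed.
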